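(* Let $m\ge n$, $B\in\mathbb R^{n\times m}$ of full row rank, $f,h$ convex and continuously differentiable with Lipschitz gradients, $\mathcal L(u,p)=f(u)-h(p)+(Bu,p)$ with saddle point $(u^*,p^* )$, and $T_{\mathcal U},\mathcal I_{\mathcal V}$ ($m\times m$), $T_{\mathcal P},\mathcal I_{\mathcal Q}$ ($n\times n$) symmetric positive definite. Suppose $h\in\mathcal S^{1,1}_{\mu_{h,T_{\mathcal P}},L_{h,T_{\mathcal P}}}$ w.r.t. $T_{\mathcal P}$ with $L_{h,T_{\mathcal P}}\le1$, $f\in\mathcal S^{1,1}_{\mu_{f,T_{\mathcal U}},L_{f,T_{\mathcal U}}}$ w.r.t. $T_{\mathcal U}$ with $L_{f,T_{\mathcal U}}\le1$, $f_B$ is strongly convex w.r.t. $\mathcal I_{\mathcal V}$ with $\mu_{f_B,\mathcal I_{\mathcal V}}>0$, and $h_B$ is strongly convex w.r.t. $\mathcal I_{\mathcal Q}$ with $\mu_{h_B,\mathcal I_{\mathcal Q}}>0$. Let $(u_k,p_k)$ be generated from $(u_0,p_0)$ by $$u_{k+1/2}=u_k-T_{\mathcal U}^{-1}(\nabla f(u_k)+B^\top p_k),\quad p_{k+1/2}=p_k-T_{\mathcal P}^{-1}(\nabla h(p_k)-Bu_k),$$ $$u_{k+1}=u_k-\alpha_k\mathcal I_{\mathcal V}^{-1}(\nabla f(u_k)+B^\top p_{k+1/2}),\quad p_{k+1}=p_k-\alpha_k\mathcal I_{\mathcal Q}^{-1}(\nabla h(p_k)-Bu_{k+1/2})$$ (equivalently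 $u_{k+1}=u_k+\alpha_k\mathcal G^u(u_k,p_k)$, $p_{k+1}=p_k+\alpha_k\mathcal G^p(u_k,p_k)$). Then $$\mathcal E(u_{k+1},p_{k+1})\le(1-\delta_k)\mathcal E(u_k,p_k)$$ for $0<\alpha_k<\min\{\mu_{f_B,\mathcal I_{\mathcal V}}/L_{\mathcal V}^2,\ \mu_{h_B,\mathcal I_{\mathcal Q}}/L_{\mathcal Q}^2\}$, where $\delta_k=\min\{\alpha_k(\mu_{f_B,\mathcal I_{\mathcal V}}-L_{\mathcal V}^2\alpha_k),\ \alpha_k(\mu_{h_B,\mathcal I_{\mathcal Q}}-L_{\mathcal Q}^2\alpha_k)\}$ satisfies $0<\delta_k<1$, with $$L_{\mathcal V}^2=2(L_{f_B,\mathcal I_{\mathcal V}}^2+L_S^2L_{e_{\mathcal U},\mathcal I_{\mathcal V}}^2),\qquad L_{\mathcal Q}^2=2(L_{h_B,\mathcal I_{\mathcal Q}}^2+L_S^2L_{e_{\mathcal P},\mathcal I_{\mathcal Q}}^2).$$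
   Context: $\partial_u\mathcal L=\nabla f(u)+B^\top p$, $\partial_p\mathcal L=Bu-\nabla h(p)$; a saddle point satisfies $\nabla\mathcal L(u^*,p^* )=0$. For SPD $M$, $\|x\|_M=(Mx,x)^{1/2}$; $D_g(y,x)=g(y)-g(x)-(\nabla g(x),y-x)$; $g\in\mathcal S^{1,1}_{\mu_{g,M},L_{g,M}}$ w.r.t. $M$ means $\frac{\mu_{g,M}}2\|x-y\|_M^2\le D_g(y,x)\le\frac{L_{g,M}}2\|x-y\|_M^2$ for all $x,y$. Define $f_B(u)=f(u)+\frac12(B^\top T_{\mathcal P}^{-1}Bu,u)$, $h_B(p)=h(p)+\frac12(BT_{\mathcal U}^{-1}B^\top p,p)$, $e_{\mathcal U}(u)=u-T_{\mathcal U}^{-1}\nabla f(u)$, $e_{\mathcal P}(p)=p-T_{\mathcal P}^{-1}\nabla h(p)$, $\mathcal G^u(u,p)=-\mathcal I_{\mathcal V}^{-1}(\partial_u\mathcal L+B^\top T_{\mathcal P}^{-1}\partial_p\mathcal L)$, $\mathcal G^p(u,p)=\mathcal I_{\mathcal Q}^{-1}(\partial_p\mathcal L-BT_{\mathcal U}^{-1}\partial_u\mathcal L)$, and $\mathcal E(u,p)=\frac12\|u-u^*\|^2_{\mathcal I_{\mathcal V}}+\frac12\|p-p^*\|^2_{\mathcal I_{\mathcal Q}}$. $L_{f_B,\mathcal I_{\mathcal V}}$, $L_{h_B,\mathcal I_{\mathcal Q}}$ are the Lipschitz constants of $\nabla f_B,\nabla h_B$ (in the sense $\|\nabla f_B(u_1)-\nabla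 f_B(u_2)\|_{\mathcal I_{\mathcal V}^{-1}}\le L_{f_B,\mathcal I_{\mathcal V}}\|u_1-u_2\|_{\mathcal I_{\mathcal V}}$, similarly for $h_B$ with $\mathcal I_{\mathcal Q}$); $L_{e_{\mathcal U},\mathcal I_{\mathcal V}}$, $L_{e_{\mathcal P},\mathcal I_{\mathcal Q}}$ are the Lipschitz constants of $e_{\mathcal U}$ in $\|\cdot\|_{\mathcal I_{\mathcal V}}$ and of $e_{\mathcal P}$ in $\|\cdot\|_{\mathcal I_{\mathcal Q}}$; $L_S^2=\lambda_{\max}(\mathcal I_{\mathcal Q}^{-1}B\mathcal I_{\mathcal V}^{-1}B^\top)$. *)

From HB Require Import structures.
From mathcomp Require Import all_boot all_order all_algebra.
From mathcomp Require Import all_classical all_reals all_analysis.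
Set Implicit Arguments. Unset Strict Implicit. Unset Printing Implicit Defensive.
Import Order.TTheory GRing.Theory Num.Theory.
Import numFieldNormedType.Exports.
Local Open Scope ring_scope.

Section Defs.
Variable R : realType.

Definition dotv k (x y : 'cV[R]_k) : R := (x^T *m y) 0 0.

Definition sqnorm k (M : 'M[R]_k) (x : 'cV[R]_k) : R := dotv (M *m x) x.

Definition spd k (M : 'M[R]_k) : Prop :=
  M^T = M /\ forall x : 'cV[R]_k, x != 0 -> 0 < sqnorm M x.

Definition gradient_of k (g : 'cV[R]_k -> R) (gg : 'cV[R]_k -> 'cV[R]_k) : Prop :=
  continuous gg /\
  forall u, differentiable g u /\ forall v, 'd g u v = dotv (gg u) v.

Definition bregman k (g : 'cV[R]_k -> R) (gg : 'cV[R]_k -> 'cV[R]_k) (y x : 'cV[R]_k) : R :=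
  g y - g x - dotv (gg x) (y - x).

Definition S11 k (g : 'cV[R]_k -> R) (gg : 'cV[R]_k -> 'cV[R]_k) (M : 'M[R]_k) (mu L : R) : Prop :=
  forall x y, mu / 2 * sqnorm M (x - y) <= bregman g gg y x /\
              bregman g gg y x <= L / 2 * sqnorm M (x - y).

Definition strongly_convex k (g : 'cV[R]_k -> R) (gg : 'cV[R]_k -> 'cV[R]_k) (M : 'M[R]_k) (mu : R) : Prop :=
  forall x y, mu / 2 * sqnorm M (x - y) <= bregman g gg y x.

Definition lipschitz_grad k (gg : 'cV[R]_k -> 'cV[R]_k) (M : 'M[R]_k) (L : R) : Prop :=
  0 <= L /\ forall u1 u2,
    sqnorm (invmx M) (gg u1 - gg u2) <= L ^+ 2 * sqnorm M (u1 - u2).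

Definition lipschitz_map k (e : 'cV[R]_k -> 'cV[R]_k) (M : 'M[R]_k) (L : R) : Prop :=
  0 <= L /\ forall u1 u2, sqnorm M (e u1 - e u2) <= L ^+ 2 * sqnorm M (u1 - u2).

Definition is_lambda_max k (A : 'M[R]_k) (l : R) : Prop :=
  eigenvalue A l /\ forall a, eigenvalue A a -> a <= l.

Definition fB n m (f : 'cV[R]_m -> R) (B : 'M[R]_(n, m)) (TP : 'M[R]_n) (u : 'cV[R]_m) : R :=
  f u + 2^-1 * dotv (B^T *m invmx TP *m B *m u) u.
Definition gfB n m (gf : 'cV[R]_m -> 'cV[R]_m) (B : 'M[R]_(n, m)) (TP : 'M[R]_n) (u : 'cV[R]_m) :=
  gf u + B^T *m invmx TP *m B *m u.
Definition hB n m (h : 'cV[R]_n -> R) (B : 'M[R]_(n, m)) (TU : 'M[R]_m) (p : 'cV[R]_n) : R :=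
  h p + 2^-1 * dotv (B *m invmx TU *m B^T *m p) p.
Definition ghB n m (gh : 'cV[R]_n -> 'cV[R]_n) (B : 'M[R]_(n, m)) (TU : 'M[R]_m) (p : 'cV[R]_n) :=
  gh p + B *m invmx TU *m B^T *m p.

Definition eU m (gf : 'cV[R]_m -> 'cV[R]_m) (TU : 'M[R]_m) (u : 'cV[R]_m) := u - invmx TU *m gf u.
Definition eP n (gh : 'cV[R]_n -> 'cV[R]_n) (TP : 'M[R]_n) (p : 'cV[R]_n) := p - invmx TP *m gh p.

Definition Lyap n m (IV : 'M[R]_m) (IQ : 'M[R]_n) (us : 'cV[R]_m) (ps : 'cV[R]_n)
  (u : 'cV[R]_m) (p : 'cV[R]_n) : R :=
  2^-1 * sqnorm IV (u - us) + 2^-1 * sqnorm IQ (p - ps).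

End Defs.

(* At the saddle point (us, ps) the residuals of the two-stage step split as
     r_u = (grad f_B(u) - grad f_B(us)) + B^T (e_P(p) - e_P(ps)),
     r_p = (grad h_B(p) - grad h_B(ps)) - B (e_U(u) - e_U(us)).
   Paired with the error (u - us, p - ps), the couplings (B (u - us), p - ps)
   cancel and cocoercivity of grad f, grad h (from L_f, L_h <= 1) absorbs the
   remaining cross terms, so (r_u, u - us) + (r_p, p - ps) is at least half of
   mu_fB |u - us|^2 + mu_hB |p - ps|^2.  The splitting and the Rayleigh-quotient
   bound |B^T x|^2 <= L_S^2 |x|^2 give |r_u|^2 + |r_p|^2 <= L_V^2 |u - us|^2
   + L_Q^2 |p - ps|^2, and expanding E along the step yields the contraction.
   Finally delta < 1 because mu_fB <= L_fB forces L_V^2 >= 2 mu_fB^2. *)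

From HB Require Import structures.
From mathcomp Require Import all_boot all_order all_algebra.
From mathcomp Require Import all_classical all_reals all_analysis.
From mathcomp Require Import ring lra.
Import Order.TTheory GRing.Theory Num.Theory.
Import numFieldNormedType.Exports.
Local Open Scope ring_scope.

Lemma const_mx1_neq0 {R : realType} p q : (0 < p)%N -> (0 < q)%N ->
  const_mx 1 != 0 :> 'M[R]_(p, q).
Proof.
move=> p_gt0 q_gt0; apply/eqP => /matrixP/(_ (Ordinal p_gt0) (Ordinal q_gt0)).
by rewrite !mxE => /eqP; rewrite oner_eq0.
Qed.

Section InnerProduct.
Context {R : realType} {k : nat}.
Implicit Types x y z : 'cV[R]_k.

Lemma dotvC x y : dotv x y = dotv y x.
Proof. by rewrite /dotv -[y^T *m x]trmxK trmx_mul trmxK [in RHS]mxE. Qed.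

Lemma dotvDl x y z : dotv (x + y) z = dotv x z + dotv y z.
Proof. by rewrite /dotv linearD /= mulmxDl mxE. Qed.

Lemma dotvZl a x z : dotv (a *: x) z = a * dotv x z.
Proof. by rewrite /dotv linearZ /= -scalemxAl mxE. Qed.

Lemma dotvNl x z : dotv (- x) z = - dotv x z.
Proof. by rewrite -scaleN1r dotvZl mulN1r. Qed.

Lemma dotvBl x y z : dotv (x - y) z = dotv x z - dotv y z.
Proof. by rewrite dotvDl dotvNl. Qed.

Lemma dotvDr x y z : dotv z (x + y) = dotv z x + dotv z y.
Proof. by rewrite dotvC dotvDl !(dotvC z). Qed.

Lemma dotvZr a x z : dotv z (a *: x) = a * dotv z x.
Proof. by rewrite dotvC dotvZl dotvC. Qed.

Lemma dotvNr x z : dotv z (- x) = - dotv z x.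
Proof. by rewrite dotvC dotvNl dotvC. Qed.

Lemma dotvBr x y z : dotv z (x - y) = dotv z x - dotv z y.
Proof. by rewrite dotvDr dotvNr. Qed.

Lemma dotv0l z : dotv 0 z = 0.
Proof. by rewrite /dotv linear0 mul0mx mxE. Qed.

Lemma dotv_mulmxl {l} (A : 'M[R]_(l, k)) x (y : 'cV[R]_l) :
  dotv (A *m x) y = dotv x (A^T *m y).
Proof. by rewrite /dotv trmx_mul mulmxA. Qed.

Lemma dotvv_eq0 z : (dotv z z == 0) = (z == 0).
Proof.
apply/idP/eqP => [|->]; last by rewrite dotv0l.
rewrite /dotv mxE psumr_eq0 => [/allP z0|i _]; last by rewrite !mxE -expr2 sqr_ge0.
apply/matrixP => i j; rewrite (ord1 j) mxE.
by have := z0 i (mem_index_enum _); rewrite !mxE -expr2 sqrf_eq0 => /eqP.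
Qed.

End InnerProduct.

Section SquaredNorm.
Context {R : realType} {k : nat}.
Implicit Types (M : 'M[R]_k) (x y g : 'cV[R]_k).

Lemma sqnorm0 {M} : sqnorm M 0 = 0.
Proof. by rewrite /sqnorm mulmx0 dotv0l. Qed.

Lemma sqnormN {M} x : sqnorm M (- x) = sqnorm M x.
Proof. by rewrite /sqnorm mulmxN dotvNl dotvNr opprK. Qed.

Lemma sqnormZ {M} a x : sqnorm M (a *: x) = a ^+ 2 * sqnorm M x.
Proof. by rewrite /sqnorm -scalemxAr dotvZl dotvZr mulrA expr2. Qed.

Lemma dotv_mulmx_sym {M} x y : M^T = M -> dotv (M *m x) y = dotv (M *m y) x.
Proof. by move=> sM; rewrite dotv_mulmxl sM dotvC. Qed.

Lemma sqnormD {M} x y : M^T = M ->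
  sqnorm M (x + y) = sqnorm M x + 2 * dotv (M *m x) y + sqnorm M y.
Proof.
by move=> sM; rewrite /sqnorm mulmxDr !dotvDl !dotvDr (dotv_mulmx_sym y x sM); ring.
Qed.

Lemma sqnormB {M} x y : M^T = M ->
  sqnorm M (x - y) = sqnorm M x - 2 * dotv (M *m x) y + sqnorm M y.
Proof. by move=> sM; rewrite sqnormD // sqnormN dotvNr mulrN. Qed.

Lemma spd_sym {M} : spd M -> M^T = M.
Proof. by case. Qed.

Lemma sqnorm_ge0 {M} x : spd M -> 0 <= sqnorm M x.
Proof.
by case=> _ M_gt0; have [->|/M_gt0/ltW //] := eqVneq x 0; rewrite sqnorm0.
Qed.

Lemma sqnormD_le {M} x y : spd M ->
  sqnorm M (x + y) <= 2 * sqnorm M x + 2 * sqnorm M y.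
Proof.
move=> hM; have := sqnorm_ge0 (x - y) hM.
by rewrite sqnormB ?sqnormD ?(spd_sym hM) //; lra.
Qed.

Lemma spd_mulmx_eq0 {M} x : spd M -> M *m x = 0 -> x = 0.
Proof.
case=> _ M_gt0 Mx0; apply/eqP; apply: contraT => /M_gt0.
by rewrite /sqnorm Mx0 dotv0l ltxx.
Qed.

Lemma spd_unitmx {M} : spd M -> M \in unitmx.
Proof.
move=> hM; rewrite -unitmx_tr -row_free_unit -kermx_eq0.
apply/rowV0P => v /sub_kermxP vM0.
have : M *m v^T = 0 by rewrite -[M]trmxK -trmx_mul vM0 trmx0.
by move/(spd_mulmx_eq0 _ hM)/(congr1 trmx); rewrite trmxK trmx0.
Qed.

Lemma spd_invmx_sym {M} : spd M -> (invmx M)^T = invmx M.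
Proof. by move=> hM; rewrite trmx_inv spd_sym. Qed.

Lemma sqnorm_invmx {M} x : spd M -> sqnorm (invmx M) x = sqnorm M (invmx M *m x).
Proof. by move=> hM; rewrite /sqnorm mulmxA mulmxV ?spd_unitmx // mul1mx dotvC. Qed.

Lemma spd_invmx {M} : spd M -> spd (invmx M).
Proof.
move=> hM; split=> [|x x0]; first exact: spd_invmx_sym.
rewrite sqnorm_invmx //; case: hM (hM) => _ M_gt0 /spd_unitmx Mu; apply: M_gt0.
by apply: contra x0 => /eqP Mx0; rewrite -[x](mulKVmx Mu) Mx0 mulmx0.
Qed.

Lemma sqnorm_step {M} x g a : spd M ->
  sqnorm M (x - a *: (invmx M *m g)) =
  sqnorm M x - 2 * a * dotv g x + a ^+ 2 * sqnorm (invmx M) g.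
Proof.
move=> hM; rewrite sqnormB ?(spd_sym hM) // sqnormZ -sqnorm_invmx //.
rewrite dotvZr dotv_mulmx_sym ?(spd_sym hM) // mulmxA mulmxV ?spd_unitmx //.
by rewrite mul1mx; ring.
Qed.

End SquaredNorm.

Section Convexity.
Context {R : realType} {k : nat}.
Context {g : 'cV[R]_k -> R} {gg : 'cV[R]_k -> 'cV[R]_k} {M : 'M[R]_k}.
Hypothesis hM : spd M.

Lemma strongly_convex_monotone {mu} : strongly_convex g gg M mu ->
  forall x y, mu * sqnorm M (y - x) <= dotv (gg y - gg x) (y - x).
Proof.
move=> g_sc x y; have := g_sc x y; have := g_sc y x.
by rewrite /bregman -(opprB y x) sqnormN !dotvNr dotvBl; lra.
Qed.

Section OneSmooth.
Hypothesis g_smooth : forall x y,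
  0 <= bregman g gg y x /\ bregman g gg y x <= 2^-1 * sqnorm M (x - y).

(* Compare D_g(y, x) with D_g at the point z = y - M^{-1}(gg y - gg x). *)
Lemma bregman_ge_dual_sqnorm x y :
  2^-1 * sqnorm (invmx M) (gg y - gg x) <= bregman g gg y x.
Proof.
set d := gg y - gg x; set z := y - invmx M *m d.
have [+ _] := g_smooth x z; have [_ +] := g_smooth y z; rewrite /bregman.
have -> : y - z = invmx M *m d by rewrite /z opprB addrC subrK.
have -> : z - y = - (invmx M *m d) by rewrite /z addrC addKr.
have -> : z - x = (y - x) - invmx M *m d by rewrite /z addrAC.
have Md : sqnorm (invmx M) d = dotv (gg y) (invmx M *m d) - dotv (gg x) (invmx M *m d).
  by rewrite /sqnorm dotvC /d dotvBl.
by rewrite -sqnorm_invmx // dotvNr Md !dotvBr; lra.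
Qed.

Lemma grad_cocoercive x y :
  sqnorm (invmx M) (gg y - gg x) <= dotv (gg y - gg x) (y - x).
Proof.
have := bregman_ge_dual_sqnorm x y; have := bregman_ge_dual_sqnorm y x.
by rewrite /bregman -(opprB (gg y)) sqnormN -(opprB y x) !dotvNr dotvBl; lra.
Qed.

End OneSmooth.

Lemma S11_cocoercive {mu L} : 0 <= mu -> L <= 1 -> S11 g gg M mu L ->
  forall x y, sqnorm (invmx M) (gg y - gg x) <= dotv (gg y - gg x) (y - x).
Proof.
move=> mu_ge0 L_le1 gS; apply: grad_cocoercive => x y.
have [lo hi] := gS x y; have := sqnorm_ge0 (x - y) hM.
by split; nra.
Qed.

Lemma strongly_convex_sqr_le_lipschitz {mu L} : (0 < k)%N -> 0 < mu ->
  strongly_convex g gg M mu -> lipschitz_grad gg M L -> mu ^+ 2 <= L ^+ 2.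
Proof.
move=> k_gt0 mu_gt0 g_sc [_ g_lip].
pose e : 'cV[R]_k := const_mx 1.
have e_neq0 : e != 0 by exact: const_mx1_neq0.
have s_gt0 : 0 < sqnorm M e by case: hM => _; apply.
have := strongly_convex_monotone g_sc 0 e; have := g_lip e 0; rewrite subr0.
set a := gg e - gg 0 => lip mono.
have := sqnorm_ge0 (mu *: e - 1 *: (invmx M *m a)) hM.
rewrite sqnorm_step // sqnormZ dotvZr expr1n mul1r => step.
by rewrite -(ler_pM2r s_gt0); nra.
Qed.

End Convexity.

Section Rayleigh.
Local Open Scope classical_set_scope.
Context {R : realType} {n : nat}.
Implicit Types (K Q N : 'M[R]_n) (x y w : 'cV[R]_n).

Lemma cV_dim_gt0 {x} : x != 0 -> (0 < n)%N.
Proof. by case: n x => // x; rewrite flatmx0 eqxx. Qed.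

Lemma eigenvalue_dim_gt0 {A : 'M[R]_n} {a} : eigenvalue A a -> (0 < n)%N.
Proof. by case/eigenvalueP; case: n A => // A v _; rewrite thinmx0 eqxx. Qed.

Lemma sqnorm_trmx_continuous K : continuous (fun v : 'rV[R]_n => sqnorm K v^T).
Proof.
have -> : (fun v : 'rV[R]_n => sqnorm K v^T) =
    (fun v => \sum_j (\sum_i K j i * v 0 i) * v 0 j).
  apply/funext => v; rewrite /sqnorm /dotv mxE; apply: eq_bigr => j _.
  by rewrite !mxE; congr (_ * _); apply: eq_bigr => i _; rewrite !mxE.
apply: continuous_big => [|j _ v]; first exact: add_continuous.
apply: continuousM; last exact: coord_continuous.
move=> u; apply: continuous_big => [|i _ u']; first exact: add_continuous.
by apply: continuousM; [exact: cst_continuous | exact: coord_continuous].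
Qed.

(* At w + t N w with t = b / (1 - a) the form is a positive multiple of b^2. *)
Lemma sqnorm_nsd_mulmx_eq0 N w : N^T = N -> (forall y, sqnorm N y <= 0) ->
  sqnorm N w = 0 -> N *m w = 0.
Proof.
move=> sN N_le0 Nw0; apply/eqP; rewrite -dotvv_eq0; apply/eqP.
set b := dotv (N *m w) (N *m w); set a := sqnorm N (N *m w).
have a_le0 : a <= 0 by exact: N_le0.
set s := (1 - a)^-1.
have s_gt0 : 0 < s by rewrite invr_gt0; lra.
have sa : s * (1 - a) = 1 by rewrite mulVf // gt_eqF //; lra.
have := N_le0 (w + (b * s) *: (N *m w)).
rewrite sqnormD // Nw0 sqnormZ dotvZr -/a -/b => N_test.
have : b ^+ 2 * (s * (1 + s)) <= 0 by nra.
have ss_gt0 : 0 < s * (1 + s) by apply: mulr_gt0; lra.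
rewrite pmulr_lle0 // => b2_le0; apply/eqP.
by rewrite -sqrf_eq0 eq_le b2_le0 sqr_ge0.
Qed.

Lemma unit_sphere_compact : compact [set v : 'rV[R]_n | `|v| = 1].
Proof.
apply: bounded_closed_compact.
  by exists 1; split => // M M_gt1 v /= ->; exact: ltW.
apply: (@preimage_closed _ _ (fun v : 'rV[R]_n => `|v|) [set 1]); last exact: closed_eq.
by move=> v _; exact: norm_continuous.
Qed.

Lemma rayleigh_quotient_max K Q : (0 < n)%N -> spd Q ->
  exists l, (exists2 w, w != 0 & sqnorm K w = l * sqnorm Q w) /\
            forall x, sqnorm K x <= l * sqnorm Q x.
Proof.
move=> n_gt0 hQ.
pose r (v : 'rV[R]_n) := sqnorm K v^T / sqnorm Q v^T.
have Q_gt0 (v : 'rV[R]_n) : v != 0 -> 0 < sqnorm Q v^T.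
  by rewrite -trmx_eq0; case: hQ => _; apply.
pose S := [set v : 'rV[R]_n | `|v| = 1].
have S_neq0 v : S v -> v != 0.
  by rewrite /S /= => v1; apply: contra_eqN v1 => /eqP->; rewrite normr0 eq_sym oner_eq0.
have S_nonempty : S !=set0.
  pose v0 : 'rV[R]_n := const_mx 1.
  have v0_neq0 : v0 != 0 by exact: const_mx1_neq0.
  by exists (`|v0|^-1 *: v0); rewrite /S /= normfZV.
have r_cont : {within S, continuous r}.
  apply: continuous_in_subspaceT => v; rewrite inE => Sv.
  apply: (@continuousM _ _ (fun v => sqnorm K v^T) (fun v => (sqnorm Q v^T)^-1)).
    exact: sqnorm_trmx_continuous.
  apply: continuousV; first by rewrite gt_eqF // Q_gt0 // S_neq0.
  exact: sqnorm_trmx_continuous.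
have [c + c_max] := EVT_max_rV S_nonempty unit_sphere_compact r_cont; rewrite inE => Sc.
have c_neq0 := S_neq0 _ Sc.
have r_scale (v : 'rV[R]_n) a : a != 0 -> r (a *: v) = r v.
  move=> a_neq0; rewrite /r linearZ /= !sqnormZ invfM mulrACA mulfV ?mul1r //.
  exact: expf_neq0.
exists (r c); split.
  exists c^T; first by rewrite trmx_eq0.
  by rewrite /r mulfVK // gt_eqF // Q_gt0.
move=> x; have [->|x_neq0] := eqVneq x 0; first by rewrite !sqnorm0 mulr0.
have xT_neq0 : x^T != 0 by rewrite trmx_eq0.
have := c_max (`|x^T|^-1 *: x^T).
rewrite !inE r_scale ?invr_eq0 ?normr_eq0 // => /(_ (normfZV xT_neq0)).
rewrite /r trmxK ler_pdivrMr //.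
by have := Q_gt0 _ xT_neq0; rewrite trmxK.
Qed.

Lemma rayleigh_max_eigenvalue K Q l w : K^T = K -> spd Q -> w != 0 ->
  sqnorm K w = l * sqnorm Q w -> (forall x, sqnorm K x <= l * sqnorm Q x) ->
  eigenvalue (invmx Q *m K) l.
Proof.
move=> sK hQ w_neq0 Kw l_max; pose N := K - l *: Q.
have sqnormN x : sqnorm N x = sqnorm K x - l * sqnorm Q x.
  by rewrite /sqnorm /N mulmxBl dotvBl -scalemxAl dotvZl.
have Nw0 : N *m w = 0.
  apply: sqnorm_nsd_mulmx_eq0 => [|y|]; last by rewrite sqnormN Kw subrr.
    by rewrite /N linearB /= linearZ /= sK spd_sym.
  by rewrite sqnormN subr_le0.
have Kw_eq : K *m w = l *: (Q *m w).
  by apply/eqP; rewrite -subr_eq0 scalemxAl -mulmxBl Nw0.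
apply/eigenvalueP; exists (Q *m w)^T.
  rewrite trmx_mul spd_sym // -mulmxA (mulmxA Q) mulmxV ?spd_unitmx // mul1mx.
  by rewrite -[K]sK -trmx_mul Kw_eq linearZ /= trmx_mul spd_sym.
by rewrite trmx_eq0; apply: contra w_neq0 => /eqP/(spd_mulmx_eq0 _ hQ)->.
Qed.

Lemma rayleigh_eigenvalue_bound {K Q} : (0 < n)%N -> K^T = K -> spd Q ->
  exists l, eigenvalue (invmx Q *m K) l /\ forall x, sqnorm K x <= l * sqnorm Q x.
Proof.
move=> n_gt0 sK hQ; have [l [[w w_neq0 Kw] l_max]] := rayleigh_quotient_max K Q n_gt0 hQ.
by exists l; split => //; exact: rayleigh_max_eigenvalue Kw l_max.
Qed.

Lemma eigenvalue_mulmxC {p q} (X : 'M[R]_(p, q)) (Y : 'M[R]_(q, p)) {a} :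
  a != 0 -> eigenvalue (X *m Y) a -> eigenvalue (Y *m X) a.
Proof.
move=> a_neq0 /eigenvalueP [v vXY v_neq0]; apply/eigenvalueP; exists (v *m X).
  by rewrite mulmxA -(mulmxA v) vXY -scalemxAl.
apply: contra v_neq0 => /eqP vX0; move: vXY; rewrite mulmxA vX0 mul0mx => /esym/eqP.
by rewrite scaler_eq0 (negbTE a_neq0).
Qed.

End Rayleigh.

Section LambdaMax.
Context {R : realType} {n m : nat}.
Context {B : 'M[R]_(n, m)} {IV : 'M[R]_m} {IQ : 'M[R]_n} {LS2 : R}.
Hypotheses (hIV : spd IV) (hIQ : spd IQ).
Hypothesis hLS : is_lambda_max (invmx IQ *m B *m invmx IV *m B^T) LS2.

Lemma lambda_max_sqnorm_trmx x : sqnorm (invmx IV) (B^T *m x) <= LS2 * sqnorm IQ x.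
Proof.
have [eig_LS LS_max] := hLS; pose K := B *m invmx IV *m B^T.
have sK : K^T = K by rewrite /K !trmx_mul trmxK spd_invmx_sym // mulmxA.
have [l [eig_l l_bound]] := rayleigh_eigenvalue_bound (eigenvalue_dim_gt0 eig_LS) sK hIQ.
have l_le : l <= LS2 by apply: LS_max; rewrite /K !mulmxA in eig_l.
have -> : sqnorm (invmx IV) (B^T *m x) = sqnorm K x.
  by rewrite /sqnorm /K -!mulmxA [RHS]dotv_mulmxl.
by apply: le_trans (l_bound x) _; rewrite ler_wpM2r // sqnorm_ge0.
Qed.

Lemma lambda_max_ge0 : 0 <= LS2.
Proof.
have n_gt0 := eigenvalue_dim_gt0 hLS.1; pose x : 'cV[R]_n := const_mx 1.
have x_gt0 : 0 < sqnorm IQ x by case: hIQ => _; apply; exact: const_mx1_neq0.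
rewrite -(pmulr_lge0 _ x_gt0); apply: le_trans (lambda_max_sqnorm_trmx x).
exact: sqnorm_ge0 (spd_invmx hIV).
Qed.

Lemma lambda_max_sqnorm_mulmx y : sqnorm (invmx IQ) (B *m y) <= LS2 * sqnorm IV y.
Proof.
have [->|y_neq0] := eqVneq y 0; first by rewrite mulmx0 !sqnorm0 mulr0.
pose K := B^T *m invmx IQ *m B.
have sK : K^T = K by rewrite /K !trmx_mul trmxK spd_invmx_sym // mulmxA.
have [l [eig_l l_bound]] := rayleigh_eigenvalue_bound (cV_dim_gt0 y_neq0) sK hIV.
have l_le : l <= LS2.
  have [->|l_neq0] := eqVneq l 0; first exact: lambda_max_ge0.
  apply: hLS.2; have := eigenvalue_mulmxC (invmx IV *m B^T) (invmx IQ *m B) l_neq0.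
  by rewrite !mulmxA; apply; rewrite /K !mulmxA in eig_l.
have -> : sqnorm (invmx IQ) (B *m y) = sqnorm K y.
  by rewrite /sqnorm /K -!mulmxA [RHS]dotv_mulmxl trmxK.
by apply: le_trans (l_bound y) _; rewrite ler_wpM2r // sqnorm_ge0.
Qed.

End LambdaMax.

(* [resid_u ...] and [resid_p ...] are -IV G^u(u, p) and -IQ G^p(u, p) of the paper. *)
Definition resid_u {R : realType} {n m} (B : 'M[R]_(n, m)) (gf : 'cV[R]_m -> 'cV[R]_m)
    (gh : 'cV[R]_n -> 'cV[R]_n) (TP : 'M[R]_n) u p :=
  gf u + B^T *m (p - invmx TP *m (gh p - B *m u)).
Definition resid_p {R : realType} {n m} (B : 'M[R]_(n, m)) (gf : 'cV[R]_m -> 'cV[R]_m)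
    (gh : 'cV[R]_n -> 'cV[R]_n) (TU : 'M[R]_m) u p :=
  gh p - B *m (u - invmx TU *m (gf u + B^T *m p)).

Section PrimalDualStep.
Context {R : realType} {n m : nat}.
Context {B : 'M[R]_(n, m)} {f : 'cV[R]_m -> R} {gf : 'cV[R]_m -> 'cV[R]_m}
  {h : 'cV[R]_n -> R} {gh : 'cV[R]_n -> 'cV[R]_n}
  {TU IV : 'M[R]_m} {TP IQ : 'M[R]_n} {us : 'cV[R]_m} {ps : 'cV[R]_n}.

Lemma gfB_sub u v : gfB gf B TP u - gfB gf B TP v =
  (gf u - gf v) + B^T *m (invmx TP *m (B *m (u - v))).
Proof. by rewrite /gfB opprD addrACA -!mulmxA -!mulmxBr. Qed.

Lemma ghB_sub p q : ghB gh B TU p - ghB gh B TU q =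
  (gh p - gh q) + B *m (invmx TU *m (B^T *m (p - q))).
Proof. by rewrite /ghB opprD addrACA -!mulmxA -!mulmxBr. Qed.

Lemma eU_sub u v : eU gf TU u - eU gf TU v = (u - v) - invmx TU *m (gf u - gf v).
Proof. by rewrite /eU mulmxBr; apply/matrixP => i j; rewrite !mxE; ring. Qed.

Lemma eP_sub p q : eP gh TP p - eP gh TP q = (p - q) - invmx TP *m (gh p - gh q).
Proof. by rewrite /eP mulmxBr; apply/matrixP => i j; rewrite !mxE; ring. Qed.

Hypotheses (hsad_u : gf us + B^T *m ps = 0) (hsad_p : B *m us - gh ps = 0).

Lemma resid_u_saddle u p : resid_u B gf gh TP u p =
  (gfB gf B TP u - gfB gf B TP us) + B^T *m (eP gh TP p - eP gh TP ps).
Proof.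
have gf_us : gf us = - (B^T *m ps) by apply/eqP; rewrite -addr_eq0 hsad_u.
have gh_ps : gh ps = B *m us by apply/esym/subr0_eq.
rewrite gfB_sub eP_sub /resid_u gf_us gh_ps !(mulmxDr, mulmxBr, mulmxN).
by apply/matrixP => i j; rewrite !mxE; ring.
Qed.

Lemma resid_p_saddle u p : resid_p B gf gh TU u p =
  (ghB gh B TU p - ghB gh B TU ps) - B *m (eU gf TU u - eU gf TU us).
Proof.
have gf_us : gf us = - (B^T *m ps) by apply/eqP; rewrite -addr_eq0 hsad_u.
have gh_ps : gh ps = B *m us by apply/esym/subr0_eq.
rewrite ghB_sub eU_sub /resid_p gf_us gh_ps !(mulmxDr, mulmxBr, mulmxN).
by apply/matrixP => i j; rewrite !mxE; ring.
Qed.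

Hypotheses (hTU : spd TU) (hIV : spd IV) (hTP : spd TP) (hIQ : spd IQ).
Context {mu_f L_f mu_h L_h mu_fB mu_hB : R}.
Hypotheses (hmu_f : 0 <= mu_f) (hL_f : L_f <= 1) (hS_f : S11 f gf TU mu_f L_f).
Hypotheses (hmu_h : 0 <= mu_h) (hL_h : L_h <= 1) (hS_h : S11 h gh TP mu_h L_h).
Hypothesis hsc_fB : strongly_convex (fB f B TP) (gfB gf B TP) IV mu_fB.
Hypothesis hsc_hB : strongly_convex (hB h B TU) (ghB gh B TU) IQ mu_hB.

(* After cocoercivity of gf and gh, the slack is
   |gf u - gf us + B^T (p - ps)|^2 + |gh p - gh ps - B (u - us)|^2. *)
Lemma resid_strong_monotone u p :
  mu_fB * sqnorm IV (u - us) + mu_hB * sqnorm IQ (p - ps) <=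
  2 * (dotv (resid_u B gf gh TP u p) (u - us) + dotv (resid_p B gf gh TU u p) (p - ps)).
Proof.
have sc_u := strongly_convex_monotone hsc_fB us u.
have sc_p := strongly_convex_monotone hsc_hB ps p.
have co_u := S11_cocoercive hTU hmu_f hL_f hS_f us u.
have co_p := S11_cocoercive hTP hmu_h hL_h hS_h ps p.
rewrite resid_u_saddle resid_p_saddle; rewrite gfB_sub in sc_u; rewrite ghB_sub in sc_p.
rewrite gfB_sub ghB_sub eP_sub eU_sub.
set du := u - us in sc_u co_u *; set dp := p - ps in sc_p co_p *.
set Dgf := gf u - gf us in sc_u co_u *; set Dgh := gh p - gh ps in sc_p co_p *.
have sq_u := sqnorm_ge0 (Dgf + B^T *m dp) (spd_invmx hTU).
have sq_p := sqnorm_ge0 (Dgh - B *m du) (spd_invmx hTP).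
rewrite sqnormD ?spd_invmx_sym // in sq_u; rewrite sqnormB ?spd_invmx_sym // in sq_p.
have cross : dotv dp (B *m du) = dotv du (B^T *m dp) by rewrite dotvC dotv_mulmxl.
move: sc_u sc_p co_u co_p sq_u sq_p.
clearbody du dp Dgf Dgh.
rewrite /sqnorm !(dotvDl, dotvNl) !(dotv_mulmxl B^T) !(dotv_mulmxl B) trmxK.
rewrite !(dotvDl, dotvNl) cross.
lra.
Qed.

Context {L_fB L_hB L_eU L_eP LS2 : R}.
Hypotheses (hL_fB : lipschitz_grad (gfB gf B TP) IV L_fB)
  (hL_hB : lipschitz_grad (ghB gh B TU) IQ L_hB)
  (hL_eU : lipschitz_map (eU gf TU) IV L_eU) (hL_eP : lipschitz_map (eP gh TP) IQ L_eP).
Hypothesis hLS : is_lambda_max (invmx IQ *m B *m invmx IV *m B^T) LS2.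

Lemma resid_u_sqnorm_le u p : sqnorm (invmx IV) (resid_u B gf gh TP u p) <=
  2 * (L_fB ^+ 2 * sqnorm IV (u - us) + LS2 * L_eP ^+ 2 * sqnorm IQ (p - ps)).
Proof.
rewrite resid_u_saddle; apply: le_trans (sqnormD_le _ _ (spd_invmx hIV)) _.
have := hL_fB.2 u us.
have := lambda_max_sqnorm_trmx hIV hIQ hLS (eP gh TP p - eP gh TP ps).
have := ler_wpM2l (lambda_max_ge0 hIV hIQ hLS) (hL_eP.2 p ps).
lra.
Qed.

Lemma resid_p_sqnorm_le u p : sqnorm (invmx IQ) (resid_p B gf gh TU u p) <=
  2 * (L_hB ^+ 2 * sqnorm IQ (p - ps) + LS2 * L_eU ^+ 2 * sqnorm IV (u - us)).
Proof.
rewrite resid_p_saddle; apply: le_trans (sqnormD_le _ _ (spd_invmx hIQ)) _.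
rewrite sqnormN; have := hL_hB.2 p ps.
have := lambda_max_sqnorm_mulmx hIV hIQ hLS (eU gf TU u - eU gf TU us).
have := ler_wpM2l (lambda_max_ge0 hIV hIQ hLS) (hL_eU.2 u us).
lra.
Qed.

Lemma Lyap_step_contraction u p al delta : 0 < al ->
  delta <= al * (mu_fB - 2 * (L_fB ^+ 2 + LS2 * L_eU ^+ 2) * al) ->
  delta <= al * (mu_hB - 2 * (L_hB ^+ 2 + LS2 * L_eP ^+ 2) * al) ->
  Lyap IV IQ us ps (u - al *: (invmx IV *m resid_u B gf gh TP u p))
                   (p - al *: (invmx IQ *m resid_p B gf gh TU u p))
    <= (1 - delta) * Lyap IV IQ us ps u p.
Proof.
move=> al_gt0 delta_le_u delta_le_p.
rewrite /Lyap (addrAC u) (addrAC p) !sqnorm_step //.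
have su_ge0 := sqnorm_ge0 (u - us) hIV; have sp_ge0 := sqnorm_ge0 (p - ps) hIQ.
have := ler_wpM2l (ltW al_gt0) (resid_strong_monotone u p).
have := ler_wpM2l (sqr_ge0 al) (lerD (resid_u_sqnorm_le u p) (resid_p_sqnorm_le u p)).
have := ler_wpM2r su_ge0 delta_le_u; have := ler_wpM2r sp_ge0 delta_le_p.
lra.
Qed.

End PrimalDualStep.

Section StepRate.
Context {R : realFieldType}.
Implicit Types a mu L : R.

Lemma step_rate_gt0 a mu L : 0 < a -> 0 < mu -> a < mu / L -> 0 < a * (mu - L * a).
Proof.
move=> a_gt0 mu_gt0 a_lt; have L_gt0 : 0 < L.
  rewrite ltNge; apply: contraTN a_lt => L_le0; rewrite -leNgt.
  by apply: le_trans (ltW a_gt0); rewrite mulr_ge0_le0 ?invr_le0 // ltW.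
by rewrite ltr_pdivlMr // in a_lt; apply: mulr_gt0 => //; lra.
Qed.

(* a (mu - 2 mu^2 a) <= 1/8 *)
Lemma step_rate_lt1 a mu L : 2 * mu ^+ 2 <= L -> a * (mu - L * a) < 1.
Proof.
move=> L_ge; have := ler_wpM2l (sqr_ge0 a) L_ge; have := sqr_ge0 (2 * a * mu - 2^-1).
lra.
Qed.

End StepRate.

Theorem theorem5p5 (R : realType) (n m : nat) (hnm : (n <= m)%N)
  (B : 'M[R]_(n, m)) (hrank : \rank B = n)
  (f : 'cV[R]_m -> R) (gf : 'cV[R]_m -> 'cV[R]_m)
  (h : 'cV[R]_n -> R) (gh : 'cV[R]_n -> 'cV[R]_n)
  (hgf : gradient_of f gf) (hgh : gradient_of h gh)
  (TU IV : 'M[R]_m) (TP IQ : 'M[R]_n)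
  (hTU : spd TU) (hIV : spd IV) (hTP : spd TP) (hIQ : spd IQ)
  (us : 'cV[R]_m) (ps : 'cV[R]_n)
  (hsad_u : gf us + B^T *m ps = 0) (hsad_p : B *m us - gh ps = 0)
  (mu_h L_h : R) (hmu_h : 0 <= mu_h) (hL_h : L_h <= 1) (hS_h : S11 h gh TP mu_h L_h)
  (mu_f L_f : R) (hmu_f : 0 <= mu_f) (hL_f : L_f <= 1) (hS_f : S11 f gf TU mu_f L_f)
  (mu_fB : R) (hmu_fB : 0 < mu_fB)
  (hsc_fB : strongly_convex (fB f B TP) (gfB gf B TP) IV mu_fB)
  (mu_hB : R) (hmu_hB : 0 < mu_hB)
  (hsc_hB : strongly_convex (hB h B TU) (ghB gh B TU) IQ mu_hB)
  (L_fB L_hB L_eU L_eP LS2 : R)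
  (hL_fB : lipschitz_grad (gfB gf B TP) IV L_fB)
  (hL_hB : lipschitz_grad (ghB gh B TU) IQ L_hB)
  (hL_eU : lipschitz_map (eU gf TU) IV L_eU)
  (hL_eP : lipschitz_map (eP gh TP) IQ L_eP)
  (hLS : is_lambda_max (invmx IQ *m B *m invmx IV *m B^T) LS2)
  (u : nat -> 'cV[R]_m) (p : nat -> 'cV[R]_n) (alpha : nat -> R)
  (hiter : forall k,
     let uh := u k - invmx TU *m (gf (u k) + B^T *m p k) in
     let ph := p k - invmx TP *m (gh (p k) - B *m u k) in
     u k.+1 = u k - alpha k *: (invmx IV *m (gf (u k) + B^T *m ph)) /\
     p k.+1 = p k - alpha k *: (invmx IQ *m (gh (p k) - B *m uh))) :
  let LV2 := 2 * (L_fB ^+ 2 + LS2 * L_eU ^+ 2) in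
  let LQ2 := 2 * (L_hB ^+ 2 + LS2 * L_eP ^+ 2) in
  forall k, 0 < alpha k -> alpha k < Num.min (mu_fB / LV2) (mu_hB / LQ2) ->
  let delta := Num.min (alpha k * (mu_fB - LV2 * alpha k))
                       (alpha k * (mu_hB - LQ2 * alpha k)) in
  0 < delta < 1 /\
  Lyap IV IQ us ps (u k.+1) (p k.+1) <= (1 - delta) * Lyap IV IQ us ps (u k) (p k).
Proof.
move=> LV2 LQ2 k al_gt0; rewrite lt_min => /andP[al_lt_u al_lt_p] delta.
have m_gt0 := leq_trans (eigenvalue_dim_gt0 hLS.1) hnm.
have LV2_ge : 2 * mu_fB ^+ 2 <= LV2.
  have := strongly_convex_sqr_le_lipschitz hIV m_gt0 hmu_fB hsc_fB hL_fB.
  have := mulr_ge0 (lambda_max_ge0 hIV hIQ hLS) (sqr_ge0 L_eU).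
  by rewrite /LV2; lra.
split.
  by rewrite lt_min !step_rate_gt0 //= gt_min step_rate_lt1.
have /= [-> ->] := hiter k.
apply: (Lyap_step_contraction hsad_u hsad_p hTU hIV hTP hIQ hmu_f hL_f hS_f hmu_h hL_h hS_h
  hsc_fB hsc_hB hL_fB hL_hB hL_eU hL_eP hLS) => //.
  by rewrite /delta ge_min lexx.
by rewrite /delta ge_min lexx orbT.
Qed.
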